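(* $$ \begin{aligned} & \log\mathcal C_2\left(\tfrac14\right)=\frac{\log2}{8}-\frac{G}{2\pi}, \\ &\log\mathcal C_3\left(\tfrac14\right)=\frac{\log2}{32}-\frac{G}{4\pi}+\frac{7\zeta_E(3)}{16\pi^2}, \\ &\log\mathcal C_4\left(\tfrac14\right)=\frac{\log2}{128}-\frac{3G}{32\pi}-\frac{3\zeta_E(3)}{64\pi^2}+\frac{3\beta(4)}{4\pi^3}, \\ &\log\mathcal C_5\left(\tfrac14\right)=\frac{\log2}{512}-\frac{G}{32\pi}-\frac{3\zeta_E(3)}{128\pi^2}+\frac{3\beta(4)}{4\pi^3}-\frac{93\zeta_E(5)}{64\pi^4}. \end{aligned} $$
   Context: For an integer $r\ge2$ let $P_r(y)=(1-y)\exp\left(y+\frac{y^2}{2}+\cdots+\frac{y^r}{r}\right)$. The multiple cosine function of Kurokawa–Koyama of order $r\ge2$ is $\mathcal C_r(x)=\prod_{n\ge1,\ n\text{ odd}}\left\{P_r\left(\frac{x}{n/2}\right)P_r\left(-\frac{x}{n/2}\right)^{(-1)^{r-1}}\right\}^{(n/2)^{r-1}}$, interpreted as $\mathcal C_r(x)=\exp\Big(\sum_{n\ge1,\,n\text{ odd}}(n/2)^{r-1}\big[\operatorname{Log}P_r(2x/n)+(-1)^{r-1}\operatorname{Log}P_r(-2x/n)\big]\Big)$, where $\operatorname{Log}P_r(y):=\operatorname{Log}(1-y)+y+\frac{y^2}{2}+\cdots+\frac{y^r}{r}$ with $\operatorname{Log}$ the principal branch. The series converges and defines a holomorphic function on $D=\mathbb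 C\setminus\big((-\infty,-\tfrac12]\cup[\tfrac12,\infty)\big)$, positive on $(-\tfrac12,\tfrac12)$; $\log\mathcal C_r(x)$ denotes the exponent above (the real logarithm for real $|x|<\tfrac12$). $\zeta_E(s)=\sum_{n=1}^\infty\frac{(-1)^{n+1}}{n^s}$, $\beta(s)=\sum_{n=0}^\infty\frac{(-1)^n}{(2n+1)^s}$, and $G=\beta(2)$ is Catalan's constant. *)

From Stdlib Require Import Reals.
From Coquelicot Require Import Coquelicot.
Open Scope R_scope.

(* Log P_r(y) = Log(1-y) + y + y^2/2 + ... + y^r/r  (real branch, used for |y| < 1) *)
Definition LogP (r : nat) (y : R) : R :=
  ln (1 - y) + sum_f_R0 (fun j => y ^ (S j) / INR (S j)) (pred r).

Definition logC_term (r : nat) (x : R) (k : nat) : R :=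
  let n := INR (2 * k + 1) in
  (n / 2) ^ (r - 1) * (LogP r (2 * x / n) + (-1) ^ (r - 1) * LogP r (- (2 * x / n))).

(* log C_r(x) for real x with |x| < 1/2 *)
Definition logC (r : nat) (x : R) : R := Series (logC_term r x).

Definition zetaE (s : nat) : R := Series (fun n => (-1) ^ n / INR (n + 1) ^ s).

Definition dbeta (s : nat) : R := Series (fun n => (-1) ^ n / INR (2 * n + 1) ^ s).

Definition Catalan : R := dbeta 2.

From Stdlib Require Import Reals Lra Lia.
From Coquelicot Require Import Coquelicot.
Open Scope R_scope.

(* Differentiating the defining series termwise and using the partial fraction expansion
   PI tan (PI t) = sum_k 8 t / ((2k+1)^2 - 4 t^2) gives
   log C_r(x) = - int_0^x t^(r-1) PI tan (PI t) dt.  At x = 1/4 an integration by parts reduces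
   this to the moments int_0^(1/4) t^j ln (2 cos (PI t)) dt.  Integrating the geometric series
   sum_k (-s)^k cos ((k+1) phi) over s in [0,1] yields the Fourier series
   ln (2 cos (PI t)) = sum_k (-1)^k cos (2 (k+1) PI t) / (k+1), which turns the moments into series
   of elementary cosine moments; the values of sin and cos at (k+1) PI / 2 split those series by the
   parity of k into values of beta and zeta_E.
   The partial fraction expansion of PI cot (PI x) is obtained by Herglotz's trick: the difference H
   of both sides is continuous on [0,1/2], vanishes at 0 and satisfies
   2 H(x) = H(x/2) - H((1-x)/2), so the maximum of |H| is also attained at points x0 / 2^k,
   which tend to 0. *)

(** * Series with telescoping majorants *)

Fixpoint psum (f : nat -> R) (N : nat) : R :=
  match N with O => 0 | S n => psum f n + f n end.

Lemma psum_succ_sum_n f N : psum f (S N) = sum_n f N.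
Proof.
  induction N as [|N IH].
  - simpl. rewrite sum_O. lra.
  - rewrite sum_Sn. simpl in *. rewrite <- IH. reflexivity.
Qed.

Lemma is_series_psum f (l : R) : is_series f l <-> is_lim_seq (psum f) l.
Proof.
  split; intros H.
  - apply is_lim_seq_incr_1, (is_lim_seq_ext (sum_n f)); [|exact H].
    intros n; symmetry; apply psum_succ_sum_n.
  - apply is_lim_seq_incr_1 in H.
    apply (is_lim_seq_ext _ (sum_n f)) in H; [exact H|].
    intros n; apply psum_succ_sum_n.
Qed.

Lemma psum_scal c f N : psum (fun k => c * f k) N = c * psum f N.
Proof. induction N; simpl; try rewrite IHN; lra. Qed.

Lemma psum_shift (a : nat -> R) N M :
  psum a (M + N) - psum a N = psum (fun k => a (N + k)%nat) M.
Proof.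
  induction M as [|M IH]; simpl.
  - lra.
  - rewrite <- IH. replace (N + M)%nat with (M + N)%nat by lia. lra.
Qed.

Lemma psum_abs_le (a b : nat -> R) N :
  (forall k, Rabs (a k) <= b k) -> Rabs (psum a N) <= psum b N.
Proof.
  intros H; induction N; simpl.
  - rewrite Rabs_R0; lra.
  - eapply Rle_trans; [apply Rabs_triang|]. specialize (H N). lra.
Qed.

Lemma is_lim_seq_rate (u : nat -> R) l C :
  (forall N, Rabs (u N - l) <= C / (INR N + 1)) -> is_lim_seq u l.
Proof.
  intros H. apply is_lim_seq_spec. intros eps.
  destruct (INR_archimed eps (Rabs C) (cond_pos eps)) as [n Hn].
  exists n. intros N HN.
  apply le_INR in HN.
  assert (HN1 : 0 < INR N + 1) by (pose proof (pos_INR N); lra).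
  eapply Rle_lt_trans; [apply H|].
  apply Rle_lt_trans with (Rabs C / (INR N + 1)).
  - apply Rmult_le_compat_r; [left; apply Rinv_0_lt_compat; lra | apply Rle_abs].
  - apply Rmult_lt_reg_r with (INR N + 1); auto.
    unfold Rdiv; rewrite Rmult_assoc, Rinv_l by lra.
    pose proof (cond_pos eps). nra.
Qed.

Definition telescope (k : nat) : R := 1 / (INR k + 1) - 1 / (INR k + 2).

Lemma telescope_eq k : telescope k = / ((INR k + 1) * (INR k + 2)).
Proof. unfold telescope. pose proof (pos_INR k). field. lra. Qed.

Lemma psum_telescope_from N M :
  psum (fun k => telescope (N + k)) M = 1 / (INR N + 1) - 1 / (INR N + INR M + 1).
Proof.
  unfold telescope. pose proof (pos_INR N).
  induction M as [|M IH]; simpl psum.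
  - simpl. rewrite Rplus_0_r. field. lra.
  - rewrite IH, plus_INR, !S_INR. pose proof (pos_INR M). field. lra.
Qed.

Lemma is_series_telescope : is_series telescope 1.
Proof.
  apply is_series_psum, (is_lim_seq_rate _ _ 1). intros N.
  pose proof (psum_telescope_from 0 N) as E.
  change (psum telescope N = 1 / (INR 0 + 1) - 1 / (INR 0 + INR N + 1)) in E.
  rewrite E. simpl INR. pose proof (pos_INR N).
  replace (1 / (0 + 1) - 1 / (0 + INR N + 1) - 1) with (- (1 / (INR N + 1))) by (field; lra).
  rewrite Rabs_Ropp, Rabs_right; [lra|]. apply Rle_ge, Rdiv_le_0_compat; lra.
Qed.

Section TelescopingMajorant.

Variables (a : nat -> R) (C : R).
Hypothesis a_bound : forall k, Rabs (a k) <= C * telescope k.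

Lemma telescoping_majorant_nonneg : 0 <= C.
Proof.
  specialize (a_bound O). pose proof (Rabs_pos (a O)).
  unfold telescope in a_bound. simpl in a_bound. lra.
Qed.

Lemma psum_tail_le N M : Rabs (psum a (M + N) - psum a N) <= C / (INR N + 1).
Proof.
  pose proof telescoping_majorant_nonneg.
  rewrite psum_shift.
  eapply Rle_trans; [apply psum_abs_le; intros k; apply (a_bound (N + k))|].
  rewrite psum_scal, psum_telescope_from.
  pose proof (pos_INR N). pose proof (pos_INR M).
  assert (0 < 1 / (INR N + INR M + 1)) by (apply Rdiv_lt_0_compat; lra).
  unfold Rdiv in *. nra.
Qed.

Lemma series_tail_le l N : is_series a l -> Rabs (l - psum a N) <= C / (INR N + 1).
Proof.
  intros Hs. apply is_series_psum in Hs.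
  assert (Htail : is_lim_seq (fun M => Rabs (psum a (M + N) - psum a N)) (Rabs (l - psum a N))).
  { apply (is_lim_seq_abs _ (l - psum a N)), is_lim_seq_minus'; [|apply is_lim_seq_const].
    apply -> (is_lim_seq_incr_n (psum a) N l). exact Hs. }
  exact (is_lim_seq_le _ _ _ _ (psum_tail_le N) Htail (is_lim_seq_const _)).
Qed.

Lemma ex_series_telescoping_majorant : ex_series a.
Proof.
  apply (ex_series_le a (fun k => C * telescope k)); [exact a_bound|].
  exists (C * 1). apply (is_series_scal C telescope 1), is_series_telescope.
Qed.

End TelescopingMajorant.

Lemma is_RInt_psum (f : nat -> R -> R) a b N :
  (forall k, ex_RInt (f k) a b) ->
  is_RInt (fun t => psum (fun k => f k t) N) a b (psum (fun k => RInt (f k) a b) N).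
Proof.
  intros Hf. induction N as [|N IH]; simpl.
  - generalize (is_RInt_const a b (0:R)). unfold scal; simpl; unfold mult; simpl.
    rewrite Rmult_0_r. auto.
  - apply (is_RInt_plus (fun t => psum (fun k => f k t) N) (f N)); auto.
    exact (RInt_correct _ _ _ (Hf N)).
Qed.

Lemma is_series_RInt (f : nat -> R -> R) (F : R -> R) a b C :
  a <= b ->
  (forall k, ex_RInt (f k) a b) -> ex_RInt F a b ->
  (forall N t, a <= t <= b -> Rabs (F t - psum (fun k => f k t) N) <= C / (INR N + 1)) ->
  is_series (fun k => RInt (f k) a b) (RInt F a b).
Proof.
  intros Hab Hf HF Hrate. apply is_series_psum.
  apply (is_lim_seq_rate _ _ ((b - a) * C)). intros N.
  pose proof (is_RInt_minus _ _ _ _ _ _ (RInt_correct _ _ _ HF) (is_RInt_psum f a b N Hf)) as Hdiff.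
  rewrite Rabs_minus_sym.
  replace ((b - a) * C / (INR N + 1)) with ((b - a) * (C / (INR N + 1)))
    by (pose proof (pos_INR N); field; lra).
  refine (norm_RInt_le_const _ _ _ _ (C / (INR N + 1)) Hab _ Hdiff).
  intros x Hx. apply Hrate; auto.
Qed.

Lemma Rabs_pow_le_1 t j : 0 <= t <= 1 -> Rabs (t ^ j) <= 1.
Proof.
  intros Ht. rewrite Rabs_right by (apply Rle_ge, pow_le; lra).
  rewrite <- (pow1 j). apply pow_incr. lra.
Qed.

Lemma is_lim_seq_inv_shift (c : R) : is_lim_seq (fun N => 1 / (c + INR N)) 0.
Proof.
  apply (is_lim_seq_ext (fun N => / (c + INR N))); [intros; unfold Rdiv; ring|].
  replace (Finite 0) with (Rbar_inv p_infty) by reflexivity.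
  apply is_lim_seq_inv; [|discriminate].
  apply is_lim_seq_plus with c p_infty; [apply is_lim_seq_const | apply is_lim_seq_INR | reflexivity].
Qed.

Lemma is_lim_seq_eq (u v : nat -> R) (l1 l2 : R) :
  (forall n, u n = v n) -> is_lim_seq u l1 -> is_lim_seq v l2 -> l1 = l2.
Proof.
  intros E H1 H2. apply is_lim_seq_unique in H1, H2.
  rewrite (Lim_seq_ext u v E), H2 in H1. injection H1; auto.
Qed.

(** * Partial fractions of the cotangent and the tangent *)

Definition cot_pf_term (x : R) (n : nat) : R := 2 * x / (x ^ 2 - (INR n + 1) ^ 2).
Definition cot_pf_tail (x : R) : R := Series (cot_pf_term x).
Definition cot_pf (x : R) : R := 1 / x + cot_pf_tail x.
Definition cot_pf_partial (x : R) (N : nat) : R := 1 / x + psum (cot_pf_term x) N.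
Definition pi_cot (x : R) : R := PI * cos (PI * x) / sin (PI * x).

Lemma sqr_le_of_Rabs_le x a : Rabs x <= a -> x ^ 2 <= a ^ 2.
Proof.
  intros H. rewrite <- (pow2_abs x). apply pow_incr. split; [apply Rabs_pos | exact H].
Qed.

Lemma cot_pf_term_bound x a k : Rabs x <= a -> a < 1 ->
  Rabs (cot_pf_term x k) <= 4 / (1 - a ^ 2) * telescope k.
Proof.
  intros Hx Ha. unfold cot_pf_term. rewrite telescope_eq.
  pose proof (pos_INR k). pose proof (Rabs_pos x).
  pose proof (sqr_le_of_Rabs_le x a Hx).
  assert (Ha2 : a ^ 2 < 1) by nra.
  set (D := (INR k + 1) ^ 2 - x ^ 2).
  assert (HD : (1 - a ^ 2) * ((INR k + 1) * (INR k + 2)) / 2 <= D) by (unfold D; nra).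
  assert (HD0 : 0 < (1 - a ^ 2) * ((INR k + 1) * (INR k + 2)) / 2).
  { apply Rmult_lt_0_compat; [apply Rmult_lt_0_compat|]; nra. }
  replace (x ^ 2 - (INR k + 1) ^ 2) with (- D) by (unfold D; ring).
  replace (4 / (1 - a ^ 2) * / ((INR k + 1) * (INR k + 2)))
    with (2 / ((1 - a ^ 2) * ((INR k + 1) * (INR k + 2)) / 2)) by (field; split; nra).
  unfold Rdiv. rewrite Rabs_mult, Rabs_inv, Rabs_Ropp, (Rabs_right D), Rabs_mult, (Rabs_right 2) by lra.
  apply Rmult_le_compat; [nra | left; apply Rinv_0_lt_compat; lra | nra |].
  apply Rinv_le_contravar; lra.
Qed.

Lemma is_series_cot_pf_tail x : Rabs x < 1 -> is_series (cot_pf_term x) (cot_pf_tail x).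
Proof.
  intros Hx. apply Series_correct, (ex_series_telescoping_majorant _ (4 / (1 - Rabs x ^ 2))).
  intros k. apply cot_pf_term_bound; lra.
Qed.

Lemma cot_pf_tail_rate x a N : Rabs x <= a -> a < 1 ->
  Rabs (cot_pf_tail x - psum (cot_pf_term x) N) <= 4 / (1 - a ^ 2) / (INR N + 1).
Proof.
  intros Hx Ha. apply series_tail_le.
  - intros k; apply cot_pf_term_bound; auto.
  - apply is_series_cot_pf_tail; lra.
Qed.

Lemma ex_derive_psum_cot_pf_term y N : Rabs y < 1 -> ex_derive (fun y => psum (cot_pf_term y) N) y.
Proof.
  intros Hy. pose proof (sqr_le_of_Rabs_le y (Rabs y) (Rle_refl _)). pose proof (Rabs_pos y).
  induction N as [|N IH]; simpl.
  - apply ex_derive_const.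
  - apply (ex_derive_plus (fun y => psum (cot_pf_term y) N) (fun y => cot_pf_term y N)); auto.
    unfold cot_pf_term. auto_derive. pose proof (pos_INR N). nra.
Qed.

Lemma cot_pf_tail_continuous c : Rabs c < 1 -> continuity_pt cot_pf_tail c.
Proof.
  intros Hc.
  set (a := (1 + Rabs c) / 2).
  assert (Ha : 0 < a) by (unfold a; pose proof (Rabs_pos c); lra).
  assert (Ha1 : a < 1) by (unfold a; lra).
  assert (HC : 0 < 4 / (1 - a ^ 2)) by (apply Rdiv_lt_0_compat; nra).
  apply (CVU_continuity (fun n y => psum (cot_pf_term y) n) cot_pf_tail 0 (mkposreal a Ha)).
  - intros eps Heps.
    destruct (INR_archimed eps (4 / (1 - a ^ 2)) Heps) as [n Hn].
    exists n. intros m y Hm Hy.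
    unfold Boule in Hy. simpl in Hy. rewrite Rminus_0_r in Hy.
    eapply Rle_lt_trans; [apply (cot_pf_tail_rate y a m); lra|].
    apply le_INR in Hm. pose proof (pos_INR m).
    apply Rmult_lt_reg_r with (INR m + 1); [lra|].
    unfold Rdiv at 1. rewrite Rmult_assoc, Rinv_l by lra. nra.
  - intros n y Hy. unfold Boule in Hy. simpl in Hy. rewrite Rminus_0_r in Hy.
    apply continuity_pt_filterlim, (ex_derive_continuous (fun y => psum (cot_pf_term y) n)).
    apply ex_derive_psum_cot_pf_term. lra.
  - unfold Boule. simpl. rewrite Rminus_0_r. unfold a. lra.
Qed.

Lemma cot_pf_tail_0 : cot_pf_tail 0 = 0.
Proof.
  assert (E : cot_pf_tail 0 = - cot_pf_tail 0).
  { unfold cot_pf_tail. rewrite <- Series_opp.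
    apply Series_ext. intros n. unfold cot_pf_term, Rdiv. ring. }
  lra.
Qed.

Lemma is_lim_seq_cot_pf_partial x : 0 < Rabs x < 1 -> is_lim_seq (cot_pf_partial x) (cot_pf x).
Proof.
  intros Hx. apply is_lim_seq_plus'; [apply is_lim_seq_const|].
  apply is_series_psum, is_series_cot_pf_tail. lra.
Qed.

Lemma cot_pf_partial_reflect x N : 0 < x < 1 ->
  cot_pf_partial (1 - x) N = - (cot_pf_partial x N + 1 / (x - INR N - 1) - 1 / (x + INR N)).
Proof.
  intros Hx. unfold cot_pf_partial. induction N as [|N IH].
  - simpl. field. lra.
  - simpl psum. rewrite <- Rplus_assoc, IH. unfold cot_pf_term.
    rewrite S_INR. pose proof (pos_INR N).
    assert ((1 - x) ^ 2 - (INR N + 1) ^ 2 <> 0) by nra.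
    assert (x ^ 2 - (INR N + 1) ^ 2 <> 0) by nra.
    field. repeat split; nra.
Qed.

Lemma cot_pf_partial_duplicate x N : 0 < x < 1 ->
  cot_pf_partial (x / 2) N + cot_pf_partial ((x + 1) / 2) N
  = 2 * cot_pf_partial x (2 * N) + 2 / (x + 2 * INR N + 1).
Proof.
  intros Hx. unfold cot_pf_partial. induction N as [|N IH].
  - simpl. field. lra.
  - replace (2 * S N)%nat with (S (S (2 * N))) by lia. cbn [psum].
    transitivity ((1 / (x / 2) + psum (cot_pf_term (x / 2)) N
                   + (1 / ((x + 1) / 2) + psum (cot_pf_term ((x + 1) / 2)) N))
                  + cot_pf_term (x / 2) N + cot_pf_term ((x + 1) / 2) N); [ring|].
    rewrite IH. unfold cot_pf_term.
    rewrite ?S_INR, ?mult_INR. simpl INR. pose proof (pos_INR N).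
    assert ((x / 2) ^ 2 - (INR N + 1) ^ 2 <> 0) by nra.
    assert (((x + 1) / 2) ^ 2 - (INR N + 1) ^ 2 <> 0) by nra.
    assert (x ^ 2 - (2 * INR N + 1) ^ 2 <> 0) by nra.
    assert (x ^ 2 - (2 * INR N + 1 + 1) ^ 2 <> 0) by nra.
    field. repeat split; nra.
Qed.

Lemma cot_pf_reflect x : 0 < x < 1 -> cot_pf (1 - x) = - cot_pf x.
Proof.
  intros Hx.
  apply (is_lim_seq_eq (cot_pf_partial (1 - x))
           (fun N => - (cot_pf_partial x N + 1 / (x - INR N - 1) - 1 / (x + INR N)))).
  - intros; apply cot_pf_partial_reflect; auto.
  - apply is_lim_seq_cot_pf_partial. rewrite Rabs_right; lra.
  - replace (- cot_pf x) with (- (cot_pf x + - 0 - 0)) by ring.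
    apply (proj1 (is_lim_seq_opp _ (cot_pf x + - 0 - 0))), is_lim_seq_minus'; [apply is_lim_seq_plus'|].
    + apply is_lim_seq_cot_pf_partial. rewrite Rabs_right; lra.
    + apply (is_lim_seq_ext (fun N => - (1 / ((1 - x) + INR N)))).
      { intros N. pose proof (pos_INR N). field. lra. }
      apply (proj1 (is_lim_seq_opp _ 0)), is_lim_seq_inv_shift.
    + apply is_lim_seq_inv_shift.
Qed.

Lemma cot_pf_duplicate x : 0 < x < 1 -> cot_pf (x / 2) + cot_pf ((x + 1) / 2) = 2 * cot_pf x.
Proof.
  intros Hx.
  apply (is_lim_seq_eq (fun N => cot_pf_partial (x / 2) N + cot_pf_partial ((x + 1) / 2) N)
           (fun N => 2 * cot_pf_partial x (2 * N) + 2 / (x + 2 * INR N + 1))).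
  - intros; apply cot_pf_partial_duplicate; auto.
  - apply is_lim_seq_plus'; apply is_lim_seq_cot_pf_partial; rewrite Rabs_right; lra.
  - replace (2 * cot_pf x) with (2 * cot_pf x + 0) by ring.
    apply is_lim_seq_plus'.
    + apply (is_lim_seq_scal_l _ 2 (Finite _)).
      apply (is_lim_seq_subseq (cot_pf_partial x) (cot_pf x) (fun n => (2 * n)%nat)).
      * intros P [N HN]. exists N. intros n Hn. apply HN. lia.
      * apply is_lim_seq_cot_pf_partial. rewrite Rabs_right; lra.
    + apply (is_lim_seq_ext (fun N => 1 / ((x + 1) / 2 + INR N))).
      { intros N. pose proof (pos_INR N). field. lra. }
      apply is_lim_seq_inv_shift.
Qed.

Lemma pi_cot_reflect x : pi_cot (1 - x) = - pi_cot x.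
Proof.
  unfold pi_cot. replace (PI * (1 - x)) with (PI - PI * x) by ring.
  rewrite sin_minus, cos_minus, sin_PI, cos_PI.
  replace (0 * cos (PI * x) - -1 * sin (PI * x)) with (sin (PI * x)) by ring.
  unfold Rdiv. ring.
Qed.

Lemma pi_cot_duplicate x : 0 < x < 1 -> pi_cot (x / 2) + pi_cot ((x + 1) / 2) = 2 * pi_cot x.
Proof.
  intros Hx. unfold pi_cot. pose proof PI_RGT_0.
  set (a := PI * (x / 2)).
  replace (PI * ((x + 1) / 2)) with (a + PI / 2) by (unfold a; field).
  replace (PI * x) with (2 * a) by (unfold a; field).
  rewrite sin_plus, cos_plus, sin_PI2, cos_PI2, sin_2a, cos_2a.
  assert (0 < sin a) by (apply sin_gt_0; unfold a; nra).
  assert (0 < cos a) by (apply cos_gt_0; unfold a; nra).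
  field. lra.
Qed.

Lemma pi_cot_sub_inv_le x : 0 < x <= 1/4 -> Rabs (pi_cot x - 1 / x) <= PI ^ 2 * x.
Proof.
  intros Hx. pose proof PI_RGT_0. pose proof PI_4.
  set (u := PI * x).
  assert (Hu : 0 < u <= 1) by (unfold u; nra).
  assert (Hsin : u - u ^ 3 / 6 <= sin u).
  { pose proof (sin_bound u 0). unfold sin_approx, sin_term in H1. simpl in H1.
    pose proof PI2_1. destruct H1; lra. }
  assert (Hcos : 1 - u ^ 2 / 2 <= cos u <= 1 - u ^ 2 / 2 + u ^ 4 / 24).
  { pose proof (cos_bound u 0). unfold cos_approx, cos_term in H1. simpl in H1.
    pose proof PI2_1. destruct H1; lra. }
  pose proof (sin_lt_x u ltac:(lra)).
  assert (Hsin_lb : 5 * u / 6 <= sin u) by nra.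
  replace (pi_cot x - 1 / x) with ((u * cos u - sin u) / (x * sin u))
    by (unfold pi_cot, u; field; split; fold u; lra).
  assert (Hnum : Rabs (u * cos u - sin u) <= u ^ 3 / 2) by (apply Rabs_le; split; nra).
  unfold Rdiv. rewrite Rabs_mult, Rabs_inv, (Rabs_right (x * sin u)) by nra.
  apply Rle_trans with (u ^ 3 / 2 * / (x * (5 * u / 6))).
  - apply Rmult_le_compat; [apply Rabs_pos | left; apply Rinv_0_lt_compat; nra | auto |].
    apply Rinv_le_contravar; nra.
  - replace (u ^ 3 / 2 * / (x * (5 * u / 6))) with (3 / 5 * PI ^ 2 * x) by (unfold u; field; lra).
    nra.
Qed.

Lemma pi_cot_continuous c : 0 < c < 1 -> continuity_pt pi_cot c.
Proof.
  intros Hc. pose proof PI_RGT_0.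
  assert (0 < sin (PI * c)) by (apply sin_gt_0; nra).
  apply continuity_pt_filterlim, (ex_derive_continuous pi_cot).
  unfold pi_cot. auto_derive. lra.
Qed.

Lemma pow2_ge_INR k : INR k <= 2 ^ k.
Proof.
  induction k as [|k IH]; [simpl; lra|].
  rewrite S_INR. simpl. pose proof (pow_R1_Rle 2 k ltac:(lra)). lra.
Qed.

Section Herglotz.

Variable H : R -> R.
Hypothesis H_continuous : forall c, 0 <= c <= 1/2 -> continuity_pt H c.
Hypothesis H_0 : H 0 = 0.
Hypothesis H_duplicate : forall x, 0 <= x <= 1/2 -> H (x / 2) - H ((1 - x) / 2) = 2 * H x.

Lemma Herglotz_max_halving x0 :
  (forall x, 0 <= x <= 1/2 -> Rabs (H x) <= Rabs (H x0)) -> 0 <= x0 <= 1/2 ->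
  forall k, Rabs (H (x0 / 2 ^ k)) = Rabs (H x0).
Proof.
  intros Hmax Hx0 k. set (M := Rabs (H x0)) in *.
  induction k as [|k IH]; [simpl; rewrite Rdiv_1_r; reflexivity|].
  set (y := x0 / 2 ^ k) in *.
  assert (Hy : 0 <= y <= 1/2).
  { pose proof (pow_R1_Rle 2 k ltac:(lra)). unfold y. split.
    - apply Rdiv_le_0_compat; lra.
    - apply Rle_trans with x0; [|lra]. apply Rmult_le_reg_r with (2 ^ k); [lra|].
      unfold Rdiv. rewrite Rmult_assoc, Rinv_l by lra. nra. }
  replace (x0 / 2 ^ S k) with (y / 2) by (unfold y; simpl; field; apply pow_nonzero; lra).
  pose proof (Hmax (y / 2) ltac:(lra)). pose proof (Hmax ((1 - y) / 2) ltac:(lra)).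
  assert (Htri : Rabs (2 * H y) <= Rabs (H (y / 2)) + Rabs (H ((1 - y) / 2))).
  { rewrite <- H_duplicate by exact Hy.
    eapply Rle_trans; [apply Rabs_triang|]. rewrite Rabs_Ropp. lra. }
  rewrite Rabs_mult, (Rabs_right 2) in Htri by lra. lra.
Qed.

Lemma Herglotz_zero x : 0 <= x <= 1/2 -> H x = 0.
Proof.
  assert (Habs : forall c, 0 <= c <= 1/2 -> continuity_pt (fun y => Rabs (H y)) c).
  { intros c Hc. apply (continuity_pt_comp H Rabs); [apply H_continuous; auto | apply Rcontinuity_abs]. }
  destruct (continuity_ab_maj _ 0 (1/2) ltac:(lra) Habs) as [x0 [Hmax Hx0]].
  assert (HM : Rabs (H x0) = 0).
  { destruct (Req_dec (Rabs (H x0)) 0) as [E|E]; auto.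
    assert (HMp : 0 < Rabs (H x0)) by (pose proof (Rabs_pos (H x0)); lra).
    pose proof (H_continuous 0 ltac:(lra)) as C0.
    unfold continuity_pt, continue_in, limit1_in, limit_in in C0. simpl in C0.
    destruct (C0 _ HMp) as [alp [Halp Hnear]].
    destruct (INR_archimed alp 1 Halp) as [k Hk].
    assert (Hk0 : 0 < INR k) by (destruct k; simpl in Hk; [lra | apply lt_0_INR; lia]).
    pose proof (pow2_ge_INR k).
    assert (Hx0k : 0 <= x0 / 2 ^ k < alp).
    { split; [apply Rdiv_le_0_compat; lra|].
      apply Rle_lt_trans with (1 / INR k).
      - unfold Rdiv. rewrite Rmult_1_l. apply Rle_trans with (1 * / 2 ^ k).
        + apply Rmult_le_compat_r; [left; apply Rinv_0_lt_compat|]; lra.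
        + rewrite Rmult_1_l. apply Rinv_le_contravar; lra.
      - apply Rmult_lt_reg_r with (INR k); auto.
        unfold Rdiv. rewrite Rmult_assoc, Rinv_l; lra. }
    assert (Hx0nz : x0 <> 0) by (intros E0; rewrite E0, H_0, Rabs_R0 in HMp; lra).
    specialize (Hnear (x0 / 2 ^ k)). rewrite H_0 in Hnear. unfold R_dist in Hnear.
    rewrite !Rminus_0_r, (Rabs_right (x0 / 2 ^ k)) in Hnear by lra.
    assert (Hlt : Rabs (H (x0 / 2 ^ k)) < Rabs (H x0)).
    { apply Hnear. split; [split; [exact I|] | lra].
      intros E1. symmetry in E1. apply Rmult_integral in E1.
      destruct E1 as [E1|E1]; [lra|]. revert E1. apply Rinv_neq_0_compat, pow_nonzero. lra. }
    rewrite (Herglotz_max_halving x0 Hmax Hx0 k) in Hlt. lra. }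
  intros Hx. pose proof (Hmax x Hx). pose proof (Rabs_pos (H x)).
  apply Rabs_eq_0. lra.
Qed.

End Herglotz.

Lemma pi_cot_opp x : pi_cot (- x) = - pi_cot x.
Proof.
  unfold pi_cot. replace (PI * - x) with (- (PI * x)) by ring.
  rewrite sin_neg, cos_neg. destruct (Req_dec (sin (PI * x)) 0) as [E|E].
  - rewrite E, Ropp_0. unfold Rdiv. rewrite Rinv_0. ring.
  - field. auto.
Qed.

Lemma continuity_pt_0_linear_bound f K d : 0 < d -> f 0 = 0 ->
  (forall x, 0 < Rabs x <= d -> Rabs (f x) <= K * Rabs x) -> continuity_pt f 0.
Proof.
  intros Hd Hf0 Hbound eps Heps.
  set (K' := Rabs K + 1).
  exists (Rmin d (eps / K')). split.
  { apply Rmin_pos; [lra | apply Rdiv_lt_0_compat; unfold K'; pose proof (Rabs_pos K); lra]. }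
  intros x [_ Hx]. simpl in *. unfold R_dist in *. rewrite Rminus_0_r in Hx. rewrite Hf0, Rminus_0_r.
  pose proof (Rmin_l d (eps / K')). pose proof (Rmin_r d (eps / K')).
  assert (HK' : 0 < K') by (unfold K'; pose proof (Rabs_pos K); lra).
  destruct (Req_dec x 0) as [E|E]; [rewrite E, Hf0, Rabs_R0; lra|].
  pose proof (Rabs_pos_lt x E).
  eapply Rle_lt_trans; [apply Hbound; lra|].
  apply Rle_lt_trans with (K' * Rabs x).
  - apply Rmult_le_compat_r; [lra|]. pose proof (Rle_abs K). unfold K'. lra.
  - apply Rmult_lt_reg_r with (/ K'); [apply Rinv_0_lt_compat; lra|].
    rewrite Rmult_comm, <- Rmult_assoc, Rinv_l, Rmult_1_l by lra. unfold Rdiv in *. lra.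
Qed.

(* At [x = 0] the junk values [/ 0 = 0] and [sin 0 = 0] make every summand vanish. *)
Definition cot_pf_defect (x : R) : R := pi_cot x - 1 / x - cot_pf_tail x.

Lemma cot_pf_defect_0 : cot_pf_defect 0 = 0.
Proof.
  unfold cot_pf_defect, pi_cot. rewrite Rmult_0_r, sin_0, cot_pf_tail_0.
  unfold Rdiv. rewrite Rinv_0. ring.
Qed.

Lemma cot_pf_defect_continuous c : 0 <= c <= 1/2 -> continuity_pt cot_pf_defect c.
Proof.
  intros Hc. unfold cot_pf_defect.
  apply (continuity_pt_minus (fun x => pi_cot x - 1 / x)); [|apply cot_pf_tail_continuous; rewrite Rabs_right; lra].
  destruct (Req_dec c 0) as [->|Hc0].
  - apply (continuity_pt_0_linear_bound _ (PI ^ 2) (1/4)); [lra | |].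
    + unfold pi_cot, Rdiv. rewrite Rmult_0_r, sin_0, Rinv_0. ring.
    + intros x Hx. destruct (Rle_or_lt 0 x) as [Hpos|Hneg].
      * rewrite (Rabs_right x) in * by lra. apply pi_cot_sub_inv_le. lra.
      * rewrite (Rabs_left x) in * by lra.
        replace (pi_cot x - 1 / x) with (- (pi_cot (- x) - 1 / (- x)))
          by (rewrite pi_cot_opp; field; lra).
        rewrite Rabs_Ropp. apply pi_cot_sub_inv_le. lra.
  - apply (continuity_pt_minus pi_cot (fun x => 1 / x)); [apply pi_cot_continuous; lra|].
    apply continuity_pt_filterlim, (ex_derive_continuous (fun x => 1 / x)).
    auto_derive. lra.
Qed.

Lemma cot_pf_defect_duplicate x : 0 <= x <= 1/2 ->
  cot_pf_defect (x / 2) - cot_pf_defect ((1 - x) / 2) = 2 * cot_pf_defect x.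
Proof.
  assert (Hdef : forall y, y <> 0 -> cot_pf_defect y = pi_cot y - cot_pf y)
    by (intros y _; unfold cot_pf_defect, cot_pf; ring).
  intros Hx. destruct (Req_dec x 0) as [->|Hx0].
  - replace (0 / 2) with 0 by field. replace ((1 - 0) / 2) with (1 / 2) by field.
    rewrite cot_pf_defect_0, Hdef by lra.
    assert (Hcot : pi_cot (1/2) = 0).
    { unfold pi_cot. replace (PI * (1/2)) with (PI/2) by field. rewrite cos_PI2. unfold Rdiv; ring. }
    pose proof (cot_pf_reflect (1/2) ltac:(lra)) as Hpf. replace (1 - 1/2) with (1/2) in Hpf by field.
    lra.
  - rewrite !Hdef by lra.
    replace ((1 - x) / 2) with (1 - (x + 1) / 2) by field.
    rewrite pi_cot_reflect, cot_pf_reflect by lra.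
    pose proof (pi_cot_duplicate x ltac:(lra)). pose proof (cot_pf_duplicate x ltac:(lra)). lra.
Qed.

Theorem pi_cot_partial_fractions x : 0 < x <= 1/2 -> pi_cot x = cot_pf x.
Proof.
  intros Hx.
  pose proof (Herglotz_zero cot_pf_defect cot_pf_defect_continuous cot_pf_defect_0
                cot_pf_defect_duplicate x ltac:(lra)) as H0.
  unfold cot_pf_defect in H0. unfold cot_pf. lra.
Qed.

Definition tan_pf_term (t : R) (k : nat) : R := 8 * t / ((2 * INR k + 1) ^ 2 - 4 * t ^ 2).

Lemma cot_pf_partial_half_sub t N : 0 <= t < 1/2 ->
  cot_pf_partial (1/2 - t) N = psum (tan_pf_term t) N + 2 / (2 * INR N + 1 - 2 * t).
Proof.
  intros Ht. unfold cot_pf_partial. induction N as [|N IH].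
  - simpl. field. lra.
  - cbn [psum]. rewrite <- Rplus_assoc, IH. unfold cot_pf_term, tan_pf_term.
    rewrite S_INR. pose proof (pos_INR N).
    assert ((1/2 - t) ^ 2 - (INR N + 1) ^ 2 <> 0) by nra.
    assert ((2 * INR N + 1) ^ 2 - 4 * t ^ 2 <> 0) by nra.
    field. repeat split; nra.
Qed.

Theorem pi_tan_partial_fractions t : 0 <= t < 1/2 -> is_series (tan_pf_term t) (PI * tan (PI * t)).
Proof.
  intros Ht. apply is_series_psum.
  replace (PI * tan (PI * t)) with (cot_pf (1/2 - t) - 0).
  2: { rewrite <- pi_cot_partial_fractions by lra. unfold pi_cot, tan.
       replace (PI * (1/2 - t)) with (PI / 2 - PI * t) by field.
       rewrite sin_shift, cos_shift. unfold Rdiv; ring. }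
  apply (is_lim_seq_ext (fun N => cot_pf_partial (1/2 - t) N - 2 / (2 * INR N + 1 - 2 * t))).
  { intros N. rewrite cot_pf_partial_half_sub by auto. ring. }
  apply is_lim_seq_minus'; [apply is_lim_seq_cot_pf_partial; rewrite Rabs_right; lra|].
  apply (is_lim_seq_ext (fun N => 1 / ((1/2 - t) + INR N))).
  { intros N. pose proof (pos_INR N). field. lra. }
  apply is_lim_seq_inv_shift.
Qed.

Lemma tan_pf_term_bound t k : 0 <= t <= 1/4 -> Rabs (tan_pf_term t k) <= 8 * telescope k.
Proof.
  intros Ht. unfold tan_pf_term. rewrite telescope_eq. pose proof (pos_INR k).
  assert (0 < (2 * INR k + 1) ^ 2 - 4 * t ^ 2) by nra.
  rewrite Rabs_right by (apply Rle_ge, Rdiv_le_0_compat; lra).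
  apply Rle_trans with (2 / ((INR k + 1) * (INR k + 2) / 4)).
  - unfold Rdiv. apply Rmult_le_compat; [lra | left; apply Rinv_0_lt_compat; lra | lra |].
    apply Rinv_le_contravar; nra.
  - right. field. lra.
Qed.

(** * log C_r as an integral of PI tan (PI t) *)

Lemma is_derive_sum_pow_div m y :
  is_derive (fun y => sum_f_R0 (fun j => y ^ S j / INR (S j)) m) y (sum_f_R0 (fun j => y ^ j) m).
Proof.
  induction m as [|m IH]; simpl sum_f_R0.
  - auto_derive; [auto | simpl; field].
  - apply (is_derive_plus (fun y => sum_f_R0 (fun j => y ^ S j / INR (S j)) m)
             (fun y => y ^ S (S m) / INR (S (S m)))); [exact IH|].
    auto_derive; [auto|]. change (match m with 0%nat => 1 | S _ => INR (S m) end + 1) with (INR (S (S m))).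
    assert (INR (S (S m)) <> 0) by (apply not_0_INR; lia).
    simpl pred. set (c := INR (S (S m))) in *. field. auto.
Qed.

Lemma is_derive_LogP m y : y < 1 -> is_derive (LogP (S m)) y (- (y ^ S m / (1 - y))).
Proof.
  intros Hy. unfold LogP. simpl pred.
  replace (- (y ^ S m / (1 - y))) with (- / (1 - y) + sum_f_R0 (fun j => y ^ j) m)
    by (rewrite tech3 by lra; field; lra).
  apply (is_derive_plus (fun y => ln (1 - y))); [|apply is_derive_sum_pow_div].
  auto_derive; [lra | field; lra].
Qed.

Lemma INR_odd k : INR (2 * k + 1) = 2 * INR k + 1.
Proof. rewrite plus_INR, mult_INR. simpl. ring. Qed.

Lemma is_derive_logC_term m k x : Rabs x < 1/2 ->
  is_derive (fun x => logC_term (S m) x k) x (- (x ^ m * tan_pf_term x k)).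
Proof.
  intros Hx. unfold logC_term, tan_pf_term. cbv zeta.
  rewrite Nat.sub_succ, Nat.sub_0_r, INR_odd.
  set (n := 2 * INR k + 1). pose proof (pos_INR k).
  assert (Hn : 1 <= n) by (unfold n; lra).
  assert (Hy : Rabs (2 * x / n) < 1).
  { unfold Rdiv. rewrite Rabs_mult, Rabs_mult, Rabs_inv, (Rabs_right 2), (Rabs_right n) by lra.
    apply Rmult_lt_reg_r with n; [lra|]. rewrite Rmult_assoc, Rinv_l by lra. nra. }
  apply Rabs_def2 in Hy.
  assert (D1 : is_derive (fun x => LogP (S m) (2 * x / n)) x (2 / n * - ((2 * x / n) ^ S m / (1 - 2 * x / n)))).
  { apply (is_derive_comp (LogP (S m)) (fun x => 2 * x / n)); [apply is_derive_LogP; lra|].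
    auto_derive; [lra | field; lra]. }
  assert (D2 : is_derive (fun x => LogP (S m) (- (2 * x / n))) x
                 (- (2 / n) * - ((- (2 * x / n)) ^ S m / (1 - - (2 * x / n))))).
  { apply (is_derive_comp (LogP (S m)) (fun x => - (2 * x / n))); [apply is_derive_LogP; lra|].
    auto_derive; [lra | field; lra]. }
  assert (D : is_derive (fun x => (n / 2) ^ m * (LogP (S m) (2 * x / n) + (-1) ^ m * LogP (S m) (- (2 * x / n)))) x
       ((n / 2) ^ m * (2 / n * - ((2 * x / n) ^ S m / (1 - 2 * x / n))
                       + (-1) ^ m * (- (2 / n) * - ((- (2 * x / n)) ^ S m / (1 - - (2 * x / n))))))).
  { apply (is_derive_scal (fun x => LogP (S m) (2 * x / n) + (-1) ^ m * LogP (S m) (- (2 * x / n)))).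
    apply (is_derive_plus (fun x => LogP (S m) (2 * x / n))); [exact D1|].
    apply (is_derive_scal (fun x => LogP (S m) (- (2 * x / n)))). exact D2. }
  replace (- (x ^ m * (8 * x / (n ^ 2 - 4 * x ^ 2)))) with
    ((n / 2) ^ m * (2 / n * - ((2 * x / n) ^ S m / (1 - 2 * x / n))
                    + (-1) ^ m * (- (2 / n) * - ((- (2 * x / n)) ^ S m / (1 - - (2 * x / n))))));
    [exact D|].
  apply Rabs_def2 in Hx.
  assert (PQ : (n / 2) ^ m * (2 / n) ^ m = 1).
  { rewrite <- Rpow_mult_distr. replace (n / 2 * (2 / n)) with 1 by (field; lra). apply pow1. }
  assert (SS : (-1) ^ m * (-1) ^ m = 1).
  { rewrite <- Rpow_mult_distr. replace (-1 * -1) with 1 by ring. apply pow1. }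
  replace (2 * x / n) with (2 / n * x) by (field; lra).
  replace (- (2 / n * x)) with (-1 * (2 / n) * x) by ring.
  rewrite !Rpow_mult_distr, <- !tech_pow_Rmult.
  set (P := (n / 2) ^ m) in *. set (Q := (2 / n) ^ m) in *.
  set (s := (-1) ^ m) in *. set (X := x ^ m).
  transitivity (P * Q * (- (4 / n ^ 2) * x * X / (1 - 2 / n * x))
                + P * Q * (s * s) * (- (4 / n ^ 2) * x * X / (1 + 2 / n * x))).
  - field. repeat split; lra.
  - rewrite PQ, SS. field. repeat split; nra.
Qed.

Lemma RInt_antiderivative (F f : R -> R) a b : a <= b ->
  (forall t, a <= t <= b -> is_derive F t (f t)) ->
  (forall t, a <= t <= b -> continuous f t) ->
  RInt f a b = F b - F a.
Proof.
  intros Hab HF Hf. apply is_RInt_unique, (is_RInt_derive F f);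
    intros t Ht; rewrite Rmin_left, Rmax_right in Ht by lra; auto.
Qed.

Lemma ex_RInt_continuous_on (f : R -> R) a b : a <= b ->
  (forall t, a <= t <= b -> continuous f t) -> ex_RInt f a b.
Proof.
  intros Hab Hf. apply (ex_RInt_continuous (V := R_CompleteNormedModule)).
  intros t Ht. rewrite Rmin_left, Rmax_right in Ht by lra. auto.
Qed.

Lemma logC_term_0 r k : logC_term r 0 k = 0.
Proof.
  assert (Hsum : forall m, sum_f_R0 (fun j => 0 ^ S j / INR (S j)) m = 0).
  { induction m as [|m IH]; cbn [sum_f_R0]; [|rewrite IH]; simpl; unfold Rdiv; ring. }
  unfold logC_term, LogP. replace (2 * 0 / INR (2 * k + 1)) with 0 by (unfold Rdiv; ring).
  rewrite Ropp_0, Rminus_0_r, ln_1, Hsum. ring.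
Qed.

Lemma continuous_pow_mul_tan_pf_term m k t : Rabs t < 1/2 ->
  continuous (fun t => t ^ m * tan_pf_term t k) t.
Proof.
  intros Ht. apply Rabs_def2 in Ht. pose proof (pos_INR k).
  apply (ex_derive_continuous (fun t => t ^ m * tan_pf_term t k)).
  unfold tan_pf_term. auto_derive. nra.
Qed.

Lemma continuous_pow_mul_pi_tan m t : Rabs t < 1/2 ->
  continuous (fun t => t ^ m * (PI * tan (PI * t))) t.
Proof.
  intros Ht. apply Rabs_def2 in Ht. pose proof PI_RGT_0.
  assert (0 < cos (PI * t)) by (apply cos_gt_0; nra).
  apply (ex_derive_continuous (fun t => t ^ m * (PI * tan (PI * t)))).
  unfold tan. auto_derive. lra.
Qed.

Theorem logC_eq_RInt_pi_tan m x : 0 <= x <= 1/4 ->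
  logC (S m) x = - RInt (fun t => t ^ m * (PI * tan (PI * t))) 0 x.
Proof.
  intros Hx.
  assert (Hterm : forall k, RInt (fun t => t ^ m * tan_pf_term t k) 0 x = - logC_term (S m) x k).
  { intros k.
    assert (HD : forall t, 0 <= t <= x ->
                   is_derive (fun t => - logC_term (S m) t k) t (t ^ m * tan_pf_term t k)).
    { intros t Ht. rewrite <- (Ropp_involutive (t ^ m * tan_pf_term t k)).
      apply (is_derive_opp (fun t => logC_term (S m) t k)), is_derive_logC_term.
      rewrite Rabs_right; lra. }
    rewrite (RInt_antiderivative _ _ 0 x ltac:(lra) HD), logC_term_0; [lra|].
    intros t Ht. apply continuous_pow_mul_tan_pf_term. rewrite Rabs_right; lra. }
  assert (Hseries : is_series (fun k => RInt (fun t => t ^ m * tan_pf_term t k) 0 x)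
                      (RInt (fun t => t ^ m * (PI * tan (PI * t))) 0 x)).
  { apply (is_series_RInt (fun k t => t ^ m * tan_pf_term t k) _ 0 x 8); [lra | | |].
    - intros k. apply ex_RInt_continuous_on; [lra|].
      intros t Ht. apply continuous_pow_mul_tan_pf_term. rewrite Rabs_right; lra.
    - apply ex_RInt_continuous_on; [lra|].
      intros t Ht. apply continuous_pow_mul_pi_tan. rewrite Rabs_right; lra.
    - intros N t Ht.
      rewrite psum_scal, <- Rmult_minus_distr_l, Rabs_mult.
      pose proof (Rabs_pow_le_1 t m ltac:(lra)).
      assert (Htail : Rabs (PI * tan (PI * t) - psum (tan_pf_term t) N) <= 8 / (INR N + 1)).
      { apply series_tail_le; [intros k; apply tan_pf_term_bound; lra|].
        apply pi_tan_partial_fractions. lra. }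
      pose proof (Rabs_pos (t ^ m)). pose proof (Rabs_pos (PI * tan (PI * t) - psum (tan_pf_term t) N)).
      nra. }
  unfold logC. apply is_series_unique.
  apply (is_series_ext (fun k => - RInt (fun t => t ^ m * tan_pf_term t k) 0 x)).
  { intros k. rewrite Hterm. apply Ropp_involutive. }
  apply (is_series_opp (V := R_NormedModule)). exact Hseries.
Qed.

Definition log2cos_moment (j : nat) : R := RInt (fun t => t ^ j * ln (2 * cos (PI * t))) 0 (1/4).

Lemma cos_pi_pos t : Rabs t < 1/2 -> 0 < cos (PI * t).
Proof. intros Ht. apply Rabs_def2 in Ht. pose proof PI_RGT_0. apply cos_gt_0; nra. Qed.

Lemma ln_2cos_pi_quarter : ln (2 * cos (PI * (1/4))) = ln 2 / 2.
Proof.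
  replace (PI * (1/4)) with (PI/4) by field. rewrite cos_PI4.
  assert (Hs : 0 < sqrt 2) by (apply sqrt_lt_R0; lra).
  replace (2 * (1 / sqrt 2)) with (sqrt 2) by (rewrite <- (sqrt_sqrt 2) at 2 by lra; field; lra).
  assert (ln 2 = ln (sqrt 2) + ln (sqrt 2)) by (rewrite <- ln_mult, sqrt_sqrt by lra; auto).
  lra.
Qed.

Lemma continuous_pow_mul_ln_2cos j t : Rabs t < 1/2 ->
  continuous (fun t => t ^ j * ln (2 * cos (PI * t))) t.
Proof.
  intros Ht. pose proof (cos_pi_pos t Ht).
  apply (ex_derive_continuous (fun t => t ^ j * ln (2 * cos (PI * t)))).
  auto_derive. lra.
Qed.

Lemma RInt_pow_pi_tan m :
  RInt (fun t => t ^ S m * (PI * tan (PI * t))) 0 (1/4)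
  = - (1/4) ^ S m * (ln 2 / 2) + INR (S m) * log2cos_moment m.
Proof.
  set (g := fun t => t ^ m * ln (2 * cos (PI * t))).
  assert (Hg : forall t, 0 <= t <= 1/4 -> continuous g t)
    by (intros t Ht; apply continuous_pow_mul_ln_2cos; rewrite Rabs_right; lra).
  assert (Hparts : RInt (fun t => t ^ S m * (PI * tan (PI * t)) - INR (S m) * g t) 0 (1/4)
                   = - (1/4) ^ S m * (ln 2 / 2)).
  { rewrite (RInt_antiderivative (fun t => - t ^ S m * ln (2 * cos (PI * t)))); [| lra | |].
    - rewrite ln_2cos_pi_quarter. simpl. ring.
    - intros t Ht. assert (Hc : 0 < cos (PI * t)) by (apply cos_pi_pos; rewrite Rabs_right; lra).
      auto_derive; [lra|].
      change (match m with 0%nat => 1 | S _ => INR m + 1 end) with (INR (S m)).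
      unfold g, tan. simpl pow. field. lra.
    - intros t Ht. assert (Hc : 0 < cos (PI * t)) by (apply cos_pi_pos; rewrite Rabs_right; lra).
      apply (ex_derive_continuous (fun t => t ^ S m * (PI * tan (PI * t)) - INR (S m) * g t)).
      unfold g, tan. auto_derive. lra. }
  assert (Hmoment : RInt (fun t => INR (S m) * g t) 0 (1/4) = INR (S m) * log2cos_moment m).
  { apply (RInt_scal (V := R_CompleteNormedModule)), ex_RInt_continuous_on; [lra | exact Hg]. }
  rewrite <- Hparts, <- Hmoment, <- (RInt_plus (V := R_CompleteNormedModule)).
  - apply RInt_ext. intros t _. unfold plus; simpl. ring.
  - apply ex_RInt_continuous_on; [lra|]. intros t Ht.
    apply (continuous_minus (fun t => t ^ S m * (PI * tan (PI * t))) (fun t => INR (S m) * g t)).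
    + apply continuous_pow_mul_pi_tan. rewrite Rabs_right; lra.
    + apply (continuous_mult (fun _ => INR (S m)) g); [apply continuous_const | auto].
  - apply ex_RInt_continuous_on; [lra|]. intros t Ht.
    apply (continuous_mult (fun _ => INR (S m)) g); [apply continuous_const | auto].
Qed.

(** * The Fourier series of ln (2 cos (PI t)) and its moments *)

Definition geom_cos_sum (N : nat) (s phi : R) : R :=
  psum (fun k => (- s) ^ k * cos (INR (k + 1) * phi)) N.
Definition log2cos_fourier_partial (N : nat) (phi : R) : R :=
  psum (fun k => (-1) ^ k * cos (INR (k + 1) * phi) / INR (k + 1)) N.

Lemma cos_add_twice a phi : cos (a + 2 * phi) = 2 * cos phi * cos (a + phi) - cos a.
Proof.
  replace (a + 2 * phi) with ((a + phi) + phi) by ring.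
  replace a with ((a + phi) - phi) at 3 by ring.
  rewrite cos_plus, cos_minus. ring.
Qed.

Lemma geom_cos_sum_closed_form N s phi :
  (1 + 2 * s * cos phi + s ^ 2) * geom_cos_sum N s phi =
  cos phi + s - (- s) ^ N * (cos (INR (N + 1) * phi) + s * cos (INR N * phi)).
Proof.
  unfold geom_cos_sum. induction N as [|N IH].
  - simpl. rewrite Rmult_0_l, cos_0. replace (1 * phi) with phi by ring. ring.
  - cbn [psum]. rewrite Rmult_plus_distr_l, IH.
    replace (INR (S N + 1) * phi) with (INR N * phi + 2 * phi) by (rewrite plus_INR, S_INR; simpl; ring).
    replace (INR (N + 1) * phi) with (INR N * phi + phi) by (rewrite plus_INR; simpl; ring).
    replace (INR (S N) * phi) with (INR N * phi + phi) by (rewrite S_INR; ring).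
    rewrite cos_add_twice. simpl pow. ring.
Qed.

Lemma is_RInt_geom_cos_sum N phi :
  is_RInt (fun s => geom_cos_sum N s phi) 0 1 (log2cos_fourier_partial N phi).
Proof.
  unfold geom_cos_sum, log2cos_fourier_partial.
  induction N as [|N IH]; cbn [psum].
  - generalize (is_RInt_const 0 1 (0:R)). unfold scal; simpl; unfold mult; simpl.
    rewrite Rmult_0_r. auto.
  - apply (is_RInt_plus (fun s => psum (fun k => (- s) ^ k * cos (INR (k + 1) * phi)) N)
             (fun s => (- s) ^ N * cos (INR (N + 1) * phi))); [exact IH|].
    pose proof (is_RInt_scal _ _ _ ((-1) ^ N * cos (INR (N + 1) * phi)) _ (is_RInt_pow 0 1 N)) as P.
    eapply is_RInt_ext; [|replace ((-1) ^ N * cos (INR (N + 1) * phi) / INR (N + 1))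
                             with (scal ((-1) ^ N * cos (INR (N + 1) * phi))
                                     (1 ^ S N / INR (S N) - 0 ^ S N / INR (S N)));
                          [exact P|]].
    + intros x _. unfold scal; simpl; unfold mult; simpl.
      replace (- x) with ((-1) * x) by ring. rewrite Rpow_mult_distr. ring.
    + unfold scal; simpl; unfold mult; simpl. rewrite pow1.
      change (match N with 0%nat => 1 | S _ => INR N + 1 end) with (INR (S N)).
      rewrite Nat.add_1_r. field. apply not_0_INR. lia.
Qed.

Lemma is_RInt_log_quadratic phi : 0 <= cos phi ->
  is_RInt (fun s => (cos phi + s) / (1 + 2 * s * cos phi + s ^ 2)) 0 1 (ln (2 + 2 * cos phi) / 2).
Proof.
  intros Hc.
  replace (ln (2 + 2 * cos phi) / 2)
    with (minus (ln (1 + 2 * 1 * cos phi + 1 ^ 2) / 2) (ln (1 + 2 * 0 * cos phi + 0 ^ 2) / 2)).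
  2: { unfold minus, plus, opp; simpl.
       replace (1 + 2 * 0 * cos phi + 0 * (0 * 1)) with 1 by ring. rewrite ln_1.
       replace (1 + 2 * 1 * cos phi + 1 * (1 * 1)) with (2 + 2 * cos phi) by ring. field. }
  apply (is_RInt_derive (fun s => ln (1 + 2 * s * cos phi + s ^ 2) / 2));
    intros s Hs; rewrite Rmin_left, Rmax_right in Hs by lra.
  - auto_derive; [nra | field; nra].
  - apply (ex_derive_continuous (fun s => (cos phi + s) / (1 + 2 * s * cos phi + s ^ 2))).
    auto_derive. nra.
Qed.

Lemma geom_cos_sum_error_le N s phi : 0 <= cos phi -> 0 <= s <= 1 ->
  Rabs ((cos phi + s) / (1 + 2 * s * cos phi + s ^ 2) - geom_cos_sum N s phi) <= 2 * s ^ N.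
Proof.
  intros Hc Hs.
  set (D := 1 + 2 * s * cos phi + s ^ 2).
  assert (HD : 1 <= D) by (unfold D; nra).
  set (A := cos (INR (N + 1) * phi) + s * cos (INR N * phi)).
  replace ((cos phi + s) / D - geom_cos_sum N s phi) with ((- s) ^ N * A / D).
  2: { apply (Rmult_eq_reg_l D); [|lra]. unfold D at 3.
       rewrite Rmult_minus_distr_l, geom_cos_sum_closed_form. fold D A. field. lra. }
  assert (HA : Rabs A <= 2).
  { unfold A. eapply Rle_trans; [apply Rabs_triang|].
    rewrite Rabs_mult, (Rabs_right s) by lra.
    pose proof (COS_bound (INR (N + 1) * phi)). pose proof (COS_bound (INR N * phi)).
    pose proof (Rabs_le (cos (INR (N + 1) * phi)) 1 ltac:(lra)).
    pose proof (Rabs_le (cos (INR N * phi)) 1 ltac:(lra)).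
    pose proof (Rabs_pos (cos (INR N * phi))). nra. }
  unfold Rdiv. rewrite !Rabs_mult, Rabs_inv, (Rabs_right D), <- RPow_abs, Rabs_Ropp, (Rabs_right s) by lra.
  assert (0 <= s ^ N) by (apply pow_le; lra).
  assert (0 < / D <= 1) by (split; [apply Rinv_0_lt_compat | rewrite <- Rinv_1; apply Rinv_le_contravar]; lra).
  pose proof (Rabs_pos A).
  assert (Rabs A * / D <= 2) by nra.
  rewrite Rmult_assoc. nra.
Qed.

Lemma log2cos_fourier_rate N phi : 0 <= cos phi ->
  Rabs (ln (2 + 2 * cos phi) / 2 - log2cos_fourier_partial N phi) <= 2 / (INR N + 1).
Proof.
  intros Hc.
  pose proof (is_RInt_minus _ _ _ _ _ _ (is_RInt_log_quadratic phi Hc) (is_RInt_geom_cos_sum N phi)) as I.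
  apply (norm_RInt_le _ (fun s => 2 * s ^ N) 0 1 _ (2 / (INR N + 1))) in I; [exact I | lra | |].
  - intros s Hs. apply geom_cos_sum_error_le; auto.
  - pose proof (is_RInt_scal _ _ _ 2 _ (is_RInt_pow 0 1 N)) as P.
    replace (2 / (INR N + 1)) with (scal 2 (1 ^ S N / INR (S N) - 0 ^ S N / INR (S N))); [exact P|].
    unfold scal; simpl; unfold mult; simpl. rewrite pow1.
    change (match N with 0%nat => 1 | S _ => INR N + 1 end) with (INR (S N)).
    rewrite S_INR. pose proof (pos_INR N). field. lra.
Qed.

Lemma ln_2cos_fourier_rate N t : 0 <= t <= 1/4 ->
  Rabs (ln (2 * cos (PI * t)) - log2cos_fourier_partial N (2 * PI * t)) <= 2 / (INR N + 1).
Proof.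
  intros Ht. pose proof PI_RGT_0.
  assert (Hc : 0 < cos (PI * t)) by (apply cos_pi_pos; rewrite Rabs_right; lra).
  replace (ln (2 * cos (PI * t))) with (ln (2 + 2 * cos (2 * PI * t)) / 2).
  - apply log2cos_fourier_rate. apply cos_ge_0; nra.
  - replace (2 + 2 * cos (2 * PI * t)) with ((2 * cos (PI * t)) * (2 * cos (PI * t))).
    + rewrite ln_mult by lra. field.
    + replace (2 * PI * t) with (2 * (PI * t)) by ring. rewrite cos_2a_cos. ring.
Qed.

Definition freq (k : nat) : R := 2 * PI * INR (k + 1).
Definition cos_moment (j k : nat) : R := RInt (fun t => t ^ j * cos (freq k * t)) 0 (1/4).

Lemma freq_neq_0 k : freq k <> 0.
Proof.
  unfold freq. pose proof PI_RGT_0. assert (0 < INR (k + 1)) by (apply lt_0_INR; lia). nra.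
Qed.

Lemma continuous_pow_mul_cos j w t : continuous (fun t => t ^ j * cos (w * t)) t.
Proof. apply (ex_derive_continuous (fun t => t ^ j * cos (w * t))). auto_derive. auto. Qed.

Lemma is_series_log2cos_moment j :
  is_series (fun k => (-1) ^ k / INR (k + 1) * cos_moment j k) (log2cos_moment j).
Proof.
  set (f := fun k t => t ^ j * ((-1) ^ k * cos (INR (k + 1) * (2 * PI * t)) / INR (k + 1))).
  apply (is_series_ext (fun k => RInt (f k) 0 (1/4))).
  { intros k. unfold cos_moment.
    rewrite <- (RInt_scal (V := R_CompleteNormedModule))
      by (apply ex_RInt_continuous_on; [lra | intros; apply continuous_pow_mul_cos]).
    apply RInt_ext. intros x _. unfold f, scal; simpl; unfold mult; simpl.
    replace (INR (k + 1) * (2 * PI * x)) with (freq k * x) by (unfold freq; ring).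
    field. apply not_0_INR. lia. }
  apply (is_series_RInt f _ 0 (1/4) 2); [lra | | |].
  - intros k. apply ex_RInt_continuous_on; [lra|]. intros t _.
    apply (ex_derive_continuous (f k)). unfold f. auto_derive. auto.
  - apply ex_RInt_continuous_on; [lra|]. intros t Ht.
    apply continuous_pow_mul_ln_2cos. rewrite Rabs_right; lra.
  - intros N t Ht. unfold f.
    rewrite psum_scal. fold (log2cos_fourier_partial N (2 * PI * t)).
    rewrite <- Rmult_minus_distr_l, Rabs_mult.
    pose proof (Rabs_pow_le_1 t j ltac:(lra)). pose proof (ln_2cos_fourier_rate N t Ht).
    pose proof (Rabs_pos (t ^ j)).
    pose proof (Rabs_pos (ln (2 * cos (PI * t)) - log2cos_fourier_partial N (2 * PI * t))).
    assert (0 <= 2 / (INR N + 1)) by (apply Rdiv_le_0_compat; pose proof (pos_INR N); lra).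
    nra.
Qed.

Definition sin_quarter (k : nat) : R := sin (freq k / 4).
Definition cos_quarter (k : nat) : R := cos (freq k / 4).

Lemma cos_moment_antiderivative j k (F : R -> R) :
  (forall t, is_derive F t (t ^ j * cos (freq k * t))) -> cos_moment j k = F (1/4) - F 0.
Proof.
  intros HF. apply RInt_antiderivative; [lra | auto | intros; apply continuous_pow_mul_cos].
Qed.

Ltac solve_cos_moment k F :=
  rewrite (cos_moment_antiderivative _ k F);
  [ unfold sin_quarter, cos_quarter; replace (freq k * (1/4)) with (freq k / 4) by field;
    rewrite ?Rmult_0_r, ?sin_0, ?cos_0; field; apply freq_neq_0
  | intros t; auto_derive; [auto | field; apply freq_neq_0] ].

Lemma cos_moment_0 k : cos_moment 0 k = sin_quarter k / freq k.
Proof. solve_cos_moment k (fun t => sin (freq k * t) / freq k). Qed.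

Lemma cos_moment_1 k :
  cos_moment 1 k = sin_quarter k / (4 * freq k) + cos_quarter k / freq k ^ 2 - 1 / freq k ^ 2.
Proof.
  solve_cos_moment k (fun t => t * sin (freq k * t) / freq k + cos (freq k * t) / freq k ^ 2).
Qed.

Lemma cos_moment_2 k :
  cos_moment 2 k = sin_quarter k / (16 * freq k) + cos_quarter k / (2 * freq k ^ 2)
                   - 2 * sin_quarter k / freq k ^ 3.
Proof.
  solve_cos_moment k (fun t => t ^ 2 * sin (freq k * t) / freq k
                                + 2 * t * cos (freq k * t) / freq k ^ 2
                                - 2 * sin (freq k * t) / freq k ^ 3).
Qed.

Lemma cos_moment_3 k :
  cos_moment 3 k = sin_quarter k / (64 * freq k) + 3 * cos_quarter k / (16 * freq k ^ 2)
                   - 3 * sin_quarter k / (2 * freq k ^ 3) - 6 * cos_quarter k / freq k ^ 4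
                   + 6 / freq k ^ 4.
Proof.
  solve_cos_moment k (fun t => t ^ 3 * sin (freq k * t) / freq k
                                + 3 * t ^ 2 * cos (freq k * t) / freq k ^ 2
                                - 6 * t * sin (freq k * t) / freq k ^ 3
                                - 6 * cos (freq k * t) / freq k ^ 4).
Qed.

(** * Splitting by parity *)

Lemma is_lim_seq_even_odd (u : nat -> R) (l : R) :
  is_lim_seq (fun n => u (2 * n)%nat) l -> is_lim_seq (fun n => u (2 * n + 1)%nat) l ->
  is_lim_seq u l.
Proof.
  intros Heven Hodd. apply is_lim_seq_spec in Heven, Hodd. apply is_lim_seq_spec.
  intros eps. destruct (Heven eps) as [N1 H1]. destruct (Hodd eps) as [N2 H2].
  exists (2 * N1 + 2 * N2)%nat. intros n Hn.
  destruct (Nat.Even_or_Odd n) as [[m ->]|[m ->]]; [apply H1 | apply H2]; lia.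
Qed.

Lemma psum_interleave (a b c : nat -> R) :
  (forall i, a (2 * i)%nat = b i) -> (forall i, a (2 * i + 1)%nat = c i) ->
  forall N, psum a (2 * N) = psum b N + psum c N.
Proof.
  intros Hb Hc. induction N as [|N IH]; [simpl; ring|].
  replace (2 * S N)%nat with (S (2 * N + 1)) by lia. cbn [psum].
  replace (2 * N + 1)%nat with (S (2 * N)) at 1 by lia. cbn [psum].
  rewrite IH. replace (S (2 * N)) with (2 * N + 1)%nat by lia. rewrite Hb, Hc. ring.
Qed.

Lemma is_series_interleave (a b c : nat -> R) (lb lc : R) :
  (forall i, a (2 * i)%nat = b i) -> (forall i, a (2 * i + 1)%nat = c i) ->
  is_series b lb -> is_series c lc -> is_series a (lb + lc).
Proof.
  intros Hb Hc Sb Sc. apply is_series_psum in Sb, Sc. apply is_series_psum, is_lim_seq_even_odd.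
  - apply (is_lim_seq_ext (fun N => psum b N + psum c N)).
    { intros N. symmetry. apply psum_interleave; auto. }
    apply is_lim_seq_plus'; auto.
  - apply (is_lim_seq_ext (fun N => psum b (S N) + psum c N)).
    { intros N. replace (2 * N + 1)%nat with (S (2 * N)) by lia. cbn [psum].
      rewrite psum_interleave with (b := b) (c := c), <- (Hb N); auto. ring. }
    apply is_lim_seq_plus'; auto. apply is_lim_seq_incr_1 in Sb. exact Sb.
Qed.

Lemma is_series_zero : is_series (fun _ => 0) 0.
Proof.
  apply is_series_psum, (is_lim_seq_ext (fun _ => 0)); [|apply is_lim_seq_const].
  intros N. induction N as [|N IH]; simpl; lra.
Qed.

Lemma alt_inv_pow_bound (d : R) k p : (2 <= p)%nat -> INR k + 1 <= d ->
  Rabs ((-1) ^ k / d ^ p) <= 2 * telescope k.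
Proof.
  intros Hp Hd. rewrite telescope_eq. pose proof (pos_INR k).
  unfold Rdiv. rewrite Rabs_mult, pow_1_abs, Rmult_1_l, Rabs_inv, Rabs_right
    by (apply Rle_ge, pow_le; lra).
  replace p with (2 + (p - 2))%nat by lia. rewrite pow_add.
  pose proof (pow_R1_Rle d (p - 2) ltac:(lra)).
  apply Rle_trans with (/ ((INR k + 1) * (INR k + 2) / 2)).
  - apply Rinv_le_contravar; [nra|]. simpl. nra.
  - right. field. lra.
Qed.

Lemma is_series_zetaE p : (2 <= p)%nat -> is_series (fun n => (-1) ^ n / INR (n + 1) ^ p) (zetaE p).
Proof.
  intros Hp. apply Series_correct, (ex_series_telescoping_majorant _ 2).
  intros k. apply alt_inv_pow_bound; auto. rewrite plus_INR. simpl. lra.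
Qed.

Lemma is_series_dbeta p : (2 <= p)%nat -> is_series (fun n => (-1) ^ n / INR (2 * n + 1) ^ p) (dbeta p).
Proof.
  intros Hp. apply Series_correct, (ex_series_telescoping_majorant _ 2).
  intros k. apply alt_inv_pow_bound; auto. rewrite INR_odd. pose proof (pos_INR k). lra.
Qed.

Lemma sin_cos_INR_mul_PI i : sin (INR i * PI) = 0 /\ cos (INR i * PI) = (-1) ^ i.
Proof.
  induction i as [|i [Hs Hc]].
  - simpl. rewrite Rmult_0_l, sin_0, cos_0. auto.
  - rewrite S_INR. replace ((INR i + 1) * PI) with (INR i * PI + PI) by ring.
    rewrite neg_sin, neg_cos, Hs, Hc. simpl. split; ring.
Qed.

Lemma freq_quarter_even i : freq (2 * i) / 4 = INR i * PI + PI / 2.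
Proof. unfold freq. rewrite INR_odd. field. Qed.

Lemma freq_quarter_odd i : freq (2 * i + 1) / 4 = INR (i + 1) * PI.
Proof. unfold freq. rewrite !plus_INR, mult_INR. simpl. field. Qed.

Lemma is_series_sin_quarter p : (2 <= p)%nat ->
  is_series (fun k => (-1) ^ k * sin_quarter k / INR (k + 1) ^ p) (dbeta p).
Proof.
  intros Hp. rewrite <- (Rplus_0_r (dbeta p)).
  apply (is_series_interleave _ (fun i => (-1) ^ i / INR (2 * i + 1) ^ p) (fun _ => 0));
    [| | apply is_series_dbeta; auto | apply is_series_zero]; intros i; unfold sin_quarter.
  - rewrite freq_quarter_even, sin_plus, sin_PI2, cos_PI2, pow_1_even.
    destruct (sin_cos_INR_mul_PI i) as [-> ->]. unfold Rdiv; ring.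
  - rewrite freq_quarter_odd. destruct (sin_cos_INR_mul_PI (i + 1)) as [-> _]. unfold Rdiv; ring.
Qed.

Lemma is_series_cos_quarter p : (2 <= p)%nat ->
  is_series (fun k => (-1) ^ k * cos_quarter k / INR (k + 1) ^ p) (zetaE p / 2 ^ p).
Proof.
  intros Hp. rewrite <- (Rplus_0_l (zetaE p / 2 ^ p)).
  apply (is_series_interleave _ (fun _ => 0) (fun i => / 2 ^ p * ((-1) ^ i / INR (i + 1) ^ p)));
    [| | apply is_series_zero | ]; [intros i; unfold cos_quarter .. |].
  - rewrite freq_quarter_even, cos_plus, sin_PI2, cos_PI2.
    destruct (sin_cos_INR_mul_PI i) as [-> _]. unfold Rdiv; ring.
  - rewrite freq_quarter_odd. destruct (sin_cos_INR_mul_PI (i + 1)) as [_ ->].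
    replace (2 * i + 1 + 1)%nat with (2 * (i + 1))%nat by lia.
    rewrite mult_INR, Rpow_mult_distr, !pow_add, pow_1_even. change (INR 2) with 2.
    assert (INR (i + 1) ^ p <> 0) by (apply pow_nonzero, not_0_INR; lia).
    assert (2 ^ p <> 0) by (apply pow_nonzero; lra).
    field. auto.
  - unfold Rdiv. rewrite Rmult_comm.
    apply (is_series_scal (/ 2 ^ p) (fun n => (-1) ^ n / INR (n + 1) ^ p)), is_series_zetaE; auto.
Qed.

Lemma is_series_Rplus (a b : nat -> R) (la lb : R) :
  is_series a la -> is_series b lb -> is_series (fun n => a n + b n) (la + lb).
Proof. apply (is_series_plus a b la lb). Qed.

Lemma is_series_Rscal (c : R) (a : nat -> R) (la : R) :
  is_series a la -> is_series (fun n => c * a n) (c * la).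
Proof. apply (is_series_scal c a la). Qed.

Lemma log2cos_moment_eq j (a : nat -> R) (l : R) :
  (forall k, (-1) ^ k / INR (k + 1) * cos_moment j k = a k) -> is_series a l ->
  log2cos_moment j = l.
Proof.
  intros Ha Hl. apply (is_series_unique a l) in Hl. rewrite <- Hl.
  symmetry. apply is_series_unique, (is_series_ext _ _ _ Ha), is_series_log2cos_moment.
Qed.

Ltac moment_term_tac k :=
  unfold freq; assert (INR (k + 1) <> 0) by (apply not_0_INR; lia);
  pose proof PI_RGT_0; field; repeat split; lra.

Lemma log2cos_moment_0 : log2cos_moment 0 = dbeta 2 / (2 * PI).
Proof.
  replace (dbeta 2 / (2 * PI)) with (/ (2 * PI) * dbeta 2) by (unfold Rdiv; ring).
  apply (log2cos_moment_eq 0 (fun k => / (2 * PI) * ((-1) ^ k * sin_quarter k / INR (k + 1) ^ 2))).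
  - intros k. rewrite cos_moment_0. moment_term_tac k.
  - apply is_series_Rscal, is_series_sin_quarter. lia.
Qed.

Lemma log2cos_moment_1 :
  log2cos_moment 1 = dbeta 2 / (8 * PI) + zetaE 3 / 2 ^ 3 / (4 * PI ^ 2) - zetaE 3 / (4 * PI ^ 2).
Proof.
  replace (dbeta 2 / (8 * PI) + zetaE 3 / 2 ^ 3 / (4 * PI ^ 2) - zetaE 3 / (4 * PI ^ 2))
    with (/ (8 * PI) * dbeta 2 + / (4 * PI ^ 2) * (zetaE 3 / 2 ^ 3) + - / (4 * PI ^ 2) * zetaE 3)
    by (unfold Rdiv; ring).
  apply (log2cos_moment_eq 1 (fun k => / (8 * PI) * ((-1) ^ k * sin_quarter k / INR (k + 1) ^ 2)
            + / (4 * PI ^ 2) * ((-1) ^ k * cos_quarter k / INR (k + 1) ^ 3)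
            + - / (4 * PI ^ 2) * ((-1) ^ k / INR (k + 1) ^ 3))).
  - intros k. rewrite cos_moment_1. moment_term_tac k.
  - repeat apply is_series_Rplus; apply is_series_Rscal;
      [apply is_series_sin_quarter | apply is_series_cos_quarter | apply is_series_zetaE]; lia.
Qed.

Lemma log2cos_moment_2 :
  log2cos_moment 2 = dbeta 2 / (32 * PI) + zetaE 3 / 2 ^ 3 / (8 * PI ^ 2) - dbeta 4 / (4 * PI ^ 3).
Proof.
  replace (dbeta 2 / (32 * PI) + zetaE 3 / 2 ^ 3 / (8 * PI ^ 2) - dbeta 4 / (4 * PI ^ 3))
    with (/ (32 * PI) * dbeta 2 + / (8 * PI ^ 2) * (zetaE 3 / 2 ^ 3) + - / (4 * PI ^ 3) * dbeta 4)
    by (unfold Rdiv; ring).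
  apply (log2cos_moment_eq 2 (fun k => / (32 * PI) * ((-1) ^ k * sin_quarter k / INR (k + 1) ^ 2)
            + / (8 * PI ^ 2) * ((-1) ^ k * cos_quarter k / INR (k + 1) ^ 3)
            + - / (4 * PI ^ 3) * ((-1) ^ k * sin_quarter k / INR (k + 1) ^ 4))).
  - intros k. rewrite cos_moment_2. moment_term_tac k.
  - repeat apply is_series_Rplus; apply is_series_Rscal;
      [apply is_series_sin_quarter | apply is_series_cos_quarter | apply is_series_sin_quarter]; lia.
Qed.

Lemma log2cos_moment_3 :
  log2cos_moment 3 = dbeta 2 / (128 * PI) + 3 * (zetaE 3 / 2 ^ 3) / (64 * PI ^ 2)
    - 3 * dbeta 4 / (16 * PI ^ 3) - 6 * (zetaE 5 / 2 ^ 5) / (16 * PI ^ 4) + 6 * zetaE 5 / (16 * PI ^ 4).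
Proof.
  replace (dbeta 2 / (128 * PI) + 3 * (zetaE 3 / 2 ^ 3) / (64 * PI ^ 2)
             - 3 * dbeta 4 / (16 * PI ^ 3) - 6 * (zetaE 5 / 2 ^ 5) / (16 * PI ^ 4)
             + 6 * zetaE 5 / (16 * PI ^ 4))
    with (/ (128 * PI) * dbeta 2 + 3 / (64 * PI ^ 2) * (zetaE 3 / 2 ^ 3)
          + - 3 / (16 * PI ^ 3) * dbeta 4 + - 6 / (16 * PI ^ 4) * (zetaE 5 / 2 ^ 5)
          + 6 / (16 * PI ^ 4) * zetaE 5)
    by (unfold Rdiv; ring).
  apply (log2cos_moment_eq 3 (fun k => / (128 * PI) * ((-1) ^ k * sin_quarter k / INR (k + 1) ^ 2)
            + 3 / (64 * PI ^ 2) * ((-1) ^ k * cos_quarter k / INR (k + 1) ^ 3)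
            + - 3 / (16 * PI ^ 3) * ((-1) ^ k * sin_quarter k / INR (k + 1) ^ 4)
            + - 6 / (16 * PI ^ 4) * ((-1) ^ k * cos_quarter k / INR (k + 1) ^ 5)
            + 6 / (16 * PI ^ 4) * ((-1) ^ k / INR (k + 1) ^ 5))).
  - intros k. rewrite cos_moment_3. moment_term_tac k.
  - repeat apply is_series_Rplus; apply is_series_Rscal;
      [apply is_series_sin_quarter | apply is_series_cos_quarter | apply is_series_sin_quarter
      | apply is_series_cos_quarter | apply is_series_zetaE]; lia.
Qed.

Theorem corollary2p6 :
  logC 2 (1/4) = ln 2 / 8 - Catalan / (2 * PI) /\
  logC 3 (1/4) = ln 2 / 32 - Catalan / (4 * PI) + 7 * zetaE 3 / (16 * PI ^ 2) /\
  logC 4 (1/4) = ln 2 / 128 - 3 * Catalan / (32 * PI) - 3 * zetaE 3 / (64 * PI ^ 2)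
                 + 3 * dbeta 4 / (4 * PI ^ 3) /\
  logC 5 (1/4) = ln 2 / 512 - Catalan / (32 * PI) - 3 * zetaE 3 / (128 * PI ^ 2)
                 + 3 * dbeta 4 / (4 * PI ^ 3) - 93 * zetaE 5 / (64 * PI ^ 4).
Proof.
  pose proof PI_RGT_0.
  rewrite !logC_eq_RInt_pi_tan, !RInt_pow_pi_tan by lra.
  rewrite log2cos_moment_0, log2cos_moment_1, log2cos_moment_2, log2cos_moment_3.
  unfold Catalan. simpl INR. repeat split; field; lra.
Qed.
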